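(* Let $(A,\pi,N,\phi)$ be a Poisson quasi-Nijenhuis Lie algebroid. Then for all $X\in\Gamma(A)$ and $\alpha,\beta\in\Gamma(A^* )$, $$\langle\mathcal T_{N^*}(\alpha,\beta),X\rangle=\phi(\pi^\sharp\alpha,\pi^\sharp\beta,X),$$ where $\mathcal T_{N^*}(\alpha,\beta)=[N^*\alpha,N^*\beta]_\pi-N^*[\alpha,\beta]^{N^*}_\pi$ is the torsion of $N^*$ with respect to $[\cdot,\cdot]_\pi$.
   Context: $(A,[\cdot,\cdot],\rho)$ is a Lie algebroid with differential $\mathrm{d}$. For $\pi\in\Gamma(\wedge^2A)$, $\pi^\sharp(\alpha)=i_\alpha\pi$, and $[\alpha,\beta]_\pi=\mathcal L_{\pi^\sharp\alpha}\beta-\mathcal L_{\pi^\sharp\beta}\alpha-\mathrm{d}(\pi(\alpha,\beta))$. For $N:A\to A$: $[X,Y]_N=[NX,Y]+[X,NY]-N[X,Y]$, $\mathcal T_N(X,Y)=[NX,NY]-N[X,Y]_N$; $[\alpha,\beta]^{N^*}_\pi=[N^*\alpha,\beta]_\pi+[\alpha,N^*\beta]_\pi-N^*[\alpha,\beta]_\pi$. $N$ is compatible with a Poisson bivector $\pi$ if $N\pi^\sharp=\pi^\sharp N^*$ and $[\alpha,\beta]_{N\pi}=[\alpha,\beta]^{N^*}_\pi$ (with $[\cdot,\cdot]_{N\pi}$ the analogous bracket for the bivector $N\pi$). A Poisson quasi-Nijenhuis Lie algebroid $(A,\pi,N,\phi)$: $\pi$ Poisson ($[\pi,\pi]=0$),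 $N$ compatible with $\pi$, $\phi\in\Gamma(\wedge^3A^* )$ closed, $\mathcal T_N(X,Y)=-\pi^\sharp(i_{X\wedge Y}\phi)$ and $\mathrm{d}(i_N\phi)=0$, where $(i_N\phi)(X,Y,Z)=\phi(NX,Y,Z)+\phi(X,NY,Z)+\phi(X,Y,NZ)$. *)

(* Algebraic (Lie--Rinehart) model of a Lie algebroid:
   C      : commutative ring  (plays the role of C^oo(M)),
   V      : C-module          (plays the role of Gamma(A)),
   1-forms (sections of A^* ) : C-linear maps V -> C,
   k-forms                    : C-multilinear alternating maps V^k -> C,
   bivectors pi               : given through pi^# : (V -> C) -> V,
                                with pi(alpha,beta) := <beta, pi^# alpha>. *)
From HB Require Import structures.
From mathcomp Require Import all_boot all_order all_algebra.
Set Implicit Arguments. Unset Strict Implicit. Unset Printing Implicit Defensive.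
Import GRing.Theory.
Local Open Scope ring_scope.

Section Defs.
Variables (C : comNzRingType) (V : lmodType C).

Definition linform (a : V -> C) : Prop :=
  forall (c : C) (x y : V), a (c *: x + y) = c * a x + a y.

Definition linendo (N : V -> V) : Prop :=
  forall (c : C) (x y : V), N (c *: x + y) = c *: N x + N y.

Record lie_algebroid (br : V -> V -> V) (rho : V -> C -> C) : Prop := {
  br_addl : forall X Y Z, br (X + Y) Z = br X Z + br Y Z;
  br_skew : forall X Y, br X Y = - br Y X;
  br_jacobi : forall X Y Z,
    br X (br Y Z) + br Y (br Z X) + br Z (br X Y) = 0;
  br_leibniz : forall X Y (f : C), br X (f *: Y) = f *: br X Y + rho X f *: Y;
  rho_linear : forall (c : C) X Y f, rho (c *: X + Y) f = c * rho X f + rho Y f;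
  rho_add : forall X f g, rho X (f + g) = rho X f + rho X g;
  rho_mul : forall X f g, rho X (f * g) = rho X f * g + f * rho X g;
  rho_br : forall X Y f, rho (br X Y) f = rho X (rho Y f) - rho Y (rho X f)
}.

Definition bivector_sharp (P : (V -> C) -> V) : Prop :=
  (forall (c : C) a b, linform a -> linform b ->
      P (fun x => c * a x + b x) = c *: P a + P b) /\
  (forall a b, linform a -> linform b -> b (P a) = - a (P b)).

Definition three_form (phi : V -> V -> V -> C) : Prop :=
  (forall (c : C) x x' y z, phi (c *: x + x') y z = c * phi x y z + phi x' y z) /\
  (forall (c : C) x y y' z, phi x (c *: y + y') z = c * phi x y z + phi x y' z) /\
  (forall (c : C) x y z z', phi x y (c *: z + z') = c * phi x y z + phi x y z') /\
  (forall x z, phi x x z = 0) /\ (forall x y, phi x y y = 0).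

Variables (br : V -> V -> V) (rho : V -> C -> C).

Definition lie1 (X : V) (b : V -> C) : V -> C :=
  fun Y => rho X (b Y) - b (br X Y).

(* Koszul bracket of 1-forms for the bivector with sharp map P:
   [a,b]_pi = L_{P a} b - L_{P b} a - d(pi(a,b)),  pi(a,b) = b (P a),
   and (d f)(Y) = rho(Y) f *)
Definition bracket_pi (P : (V -> C) -> V) (a b : V -> C) : V -> C :=
  fun Y => lie1 (P a) b Y - lie1 (P b) a Y - rho Y (b (P a)).

Definition dualN (N : V -> V) (a : V -> C) : V -> C := fun x => a (N x).

Definition bracket_pi_N (N : V -> V) (P : (V -> C) -> V) (a b : V -> C) : V -> C :=
  fun Y => bracket_pi P (dualN N a) b Y + bracket_pi P a (dualN N b) Y
           - bracket_pi P a b (N Y).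

Definition bracketN (N : V -> V) (X Y : V) : V :=
  br (N X) Y + br X (N Y) - N (br X Y).
Definition torsionN (N : V -> V) (X Y : V) : V :=
  br (N X) (N Y) - N (bracketN N X Y).

Definition torsion_dualN (N : V -> V) (P : (V -> C) -> V) (a b : V -> C) : V -> C :=
  fun X => bracket_pi P (dualN N a) (dualN N b) X - dualN N (bracket_pi_N N P a b) X.

(* Schouten bracket [pi,pi] of a bivector with itself, evaluated on 1-forms,
   via the standard identity (1/2)[pi,pi](a,b,.) = pi^#[a,b]_pi - [pi^# a, pi^# b].
   (We use the half, so no division by 2 is needed; vanishing is unaffected.) *)
Definition half_schouten (P : (V -> C) -> V) (a b g : V -> C) : C :=
  g (P (bracket_pi P a b) - br (P a) (P b)).

Definition poisson (P : (V -> C) -> V) : Prop :=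
  forall a b g, linform a -> linform b -> linform g -> half_schouten P a b g = 0.

(* N compatible with pi: N pi^# = pi^# N^*  and [.,.]_{N pi} = [.,.]^{N^*}_pi,
   where (N pi)^# = N o pi^# *)
Definition compatible (N : V -> V) (P : (V -> C) -> V) : Prop :=
  (forall a, linform a -> N (P a) = P (dualN N a)) /\
  (forall a b, linform a -> linform b -> forall Y,
      bracket_pi (fun g => N (P g)) a b Y = bracket_pi_N N P a b Y).

Definition d3 (phi : V -> V -> V -> C) (X0 X1 X2 X3 : V) : C :=
    rho X0 (phi X1 X2 X3) - rho X1 (phi X0 X2 X3)
  + rho X2 (phi X0 X1 X3) - rho X3 (phi X0 X1 X2)
  - phi (br X0 X1) X2 X3 + phi (br X0 X2) X1 X3 - phi (br X0 X3) X1 X2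
  - phi (br X1 X2) X0 X3 + phi (br X1 X3) X0 X2 - phi (br X2 X3) X0 X1.

Definition closed3 (phi : V -> V -> V -> C) : Prop :=
  forall X0 X1 X2 X3, d3 phi X0 X1 X2 X3 = 0.

Definition iN (N : V -> V) (phi : V -> V -> V -> C) : V -> V -> V -> C :=
  fun X Y Z => phi (N X) Y Z + phi X (N Y) Z + phi X Y (N Z).

(* i_{X /\ Y} phi := i_X i_Y phi = phi(Y, X, .) *)
Definition i_wedge (X Y : V) (phi : V -> V -> V -> C) : V -> C :=
  fun Z => phi Y X Z.

Definition PqN (P : (V -> C) -> V) (N : V -> V) (phi : V -> V -> V -> C) : Prop :=
  lie_algebroid br rho /\ bivector_sharp P /\ poisson P /\ linendo N /\
  compatible N P /\ three_form phi /\ closed3 phi /\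
  (forall X Y, torsionN N X Y = - P (i_wedge X Y phi)) /\
  closed3 (iN N phi).

End Defs.

From HB Require Import structures.
From mathcomp Require Import all_boot all_order all_algebra ring.
Set Implicit Arguments. Unset Strict Implicit. Unset Printing Implicit Defensive.
Import GRing.Theory.
Local Open Scope ring_scope.

(* 1. For ANY C-linear N compatible with a bivector pi (no Poisson, closedness
      or Lie algebroid axiom is needed), the torsion of N^* with respect to the
      Koszul bracket is dual to the torsion of N:
          < T_{N^*}(a,b), X > = < b, T_N(pi^# a, X) >            (torsion_dualN_pairing)
      Rewrite N^*[a,b]^{N^*}_pi as [a,b]_{N pi} evaluated at N X, expand both
      Koszul brackets, and cancel the remaining terms with the compatibility
      condition [a,N^*b]_{N pi} = [a,N^*b]^{N^*}_pi at X (compat_cross_identity).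

   2. The quasi-Nijenhuis condition T_N(Y,X) = - pi^#(i_{Y/\X} phi), paired with
      b, gives phi(Y, pi^# b, X) by skew-symmetry of pi and of phi
      (pairing_contraction); with Y = pi^# a this is phi(pi^# a, pi^# b, X). *)

Lemma eq_by_difference (R : zmodType) (x y u v : R) :
  u = v -> x - y = u - v -> x = y.
Proof. by move=> -> /eqP; rewrite subrr subr_eq0 => /eqP. Qed.

Section LinearForms.
Variables (C : comNzRingType) (V : lmodType C).

Lemma linformD (a : V -> C) : linform a -> forall x y, a (x + y) = a x + a y.
Proof. by move=> la x y; rewrite -{1}(scale1r x) la mul1r. Qed.

Lemma linform0 (a : V -> C) : linform a -> a 0 = 0.
Proof. by move=> la; apply: (@addIr _ (a 0)); rewrite -linformD // !addr0 add0r. Qed.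

Lemma linformN (a : V -> C) : linform a -> forall x, a (- x) = - a x.
Proof.
by move=> la x; apply: (@addrI _ (a x)); rewrite -linformD // !subrr linform0.
Qed.

Lemma linformB (a : V -> C) : linform a -> forall x y, a (x - y) = a x - a y.
Proof. by move=> la x y; rewrite linformD // linformN. Qed.

Lemma linendo0 (N : V -> V) : linendo N -> N 0 = 0.
Proof.
move=> HN; apply: (@addIr _ (N 0)).
by have := HN 1 0 0; rewrite scaler0 !addr0 scale1r add0r.
Qed.

Lemma linendoD (N : V -> V) : linendo N -> forall x y, N (x + y) = N x + N y.
Proof. by move=> HN x y; rewrite -{1}(scale1r x) HN scale1r. Qed.

Lemma linendoN (N : V -> V) : linendo N -> forall x, N (- x) = - N x.
Proof.
by move=> HN x; apply: (@addrI _ (N x)); rewrite -linendoD // !subrr linendo0.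
Qed.

Lemma linendoB (N : V -> V) : linendo N -> forall x y, N (x - y) = N x - N y.
Proof. by move=> HN x y; rewrite linendoD // linendoN. Qed.

Lemma linform_dualN (N : V -> V) (a : V -> C) :
  linendo N -> linform a -> linform (dualN N a).
Proof. by move=> HN la c x y; rewrite /dualN HN la. Qed.

End LinearForms.

Section ThreeForms.
Variables (C : comNzRingType) (V : lmodType C) (phi : V -> V -> V -> C).
Hypothesis phi3 : three_form phi.

Lemma three_formD1 x x' y z : phi (x + x') y z = phi x y z + phi x' y z.
Proof. by case: phi3 => l1 _; have := l1 1 x x' y z; rewrite scale1r mul1r. Qed.

Lemma three_formD2 x y y' z : phi x (y + y') z = phi x y z + phi x y' z.
Proof. by case: phi3 => _ [l2 _]; have := l2 1 x y y' z; rewrite scale1r mul1r. Qed.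

Lemma three_formD3 x y z z' : phi x y (z + z') = phi x y z + phi x y z'.
Proof. by case: phi3 => _ [_ [l3 _]]; have := l3 1 x y z z'; rewrite scale1r mul1r. Qed.

(* Vanishing on repeated arguments makes a three-form skew in each pair of
   adjacent arguments (polarisation). *)
Lemma three_form_swap12 x y z : phi x y z = - phi y x z.
Proof.
case: phi3 => _ [_ [_ [alt12 _]]].
apply/eqP; rewrite -addr_eq0; apply/eqP.
by have := alt12 (x + y) z; rewrite three_formD1 !three_formD2 !alt12 add0r addr0.
Qed.

Lemma three_form_swap23 x y z : phi x y z = - phi x z y.
Proof.
case: phi3 => _ [_ [_ [_ alt23]]].
apply/eqP; rewrite -addr_eq0; apply/eqP.
by have := alt23 x (y + z); rewrite three_formD2 !three_formD3 !alt23 add0r addr0.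
Qed.

End ThreeForms.

Section Compatibility.
Variables (C : comNzRingType) (V : lmodType C).
Variables (br : V -> V -> V) (rho : V -> C -> C) (P : (V -> C) -> V) (N : V -> V).
Hypotheses (HN : linendo N) (HNP : compatible br rho N P).

(* The compatibility [a, N^*b]_{N pi} = [a, N^*b]^{N^*}_pi evaluated at X,
   after expanding the Koszul brackets and cancelling common terms. *)
Lemma compat_cross_identity (a b : V -> C) (X : V) : linform a -> linform b ->
  a (N (br (P (dualN N b)) X)) - a (br (P (dualN N b)) (N X))
  - rho X (b (N (N (P a)))) + rho (N X) (b (N (P a)))
  = b (N (N (br (P a) X))) - b (N (br (P a) (N X))).
Proof.
move=> la lb; case: HNP => HNP1 HNP2.
have lNb := linform_dualN HN lb.
have := HNP2 a (dualN N b) la lNb X.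
rewrite /bracket_pi_N /bracket_pi /lie1 (HNP1 _ lNb) -(HNP1 _ la) /dualN /= => H.
by apply: (eq_by_difference (esym H)); ring.
Qed.

Lemma torsion_dualN_pairing (a b : V -> C) (X : V) : linform a -> linform b ->
  torsion_dualN br rho N P a b X = b (torsionN br N (P a) X).
Proof.
move=> la lb; case: HNP => HNP1 HNP2.
have cross := compat_cross_identity X la lb.
rewrite /torsion_dualN [dualN N (bracket_pi_N _ _ _ _ _ _)]/dualN -(HNP2 _ _ la lb).
rewrite /torsionN /bracketN.
rewrite !(linformB lb, linformD lb, linformN lb, linendoB HN, linendoD HN, linendoN HN).
rewrite /bracket_pi /lie1 (HNP1 _ lb) -(HNP1 _ la) /dualN /= in cross *.
by apply: (eq_by_difference cross); ring.
Qed.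
End Compatibility.

Lemma pairing_contraction (C : comNzRingType) (V : lmodType C)
    (P : (V -> C) -> V) (phi : V -> V -> V -> C) (U W : V) (b : V -> C) :
  bivector_sharp P -> three_form phi -> linform b ->
  b (- P (i_wedge U W phi)) = phi U (P b) W.
Proof.
move=> [_ Pskew] phi3 lb.
have lphi : linform (i_wedge U W phi) by case: phi3 => _ [_ [l3 _]] c x y; apply: l3.
rewrite linformN // Pskew // opprK /i_wedge.
by rewrite three_form_swap12 // three_form_swap23 // opprK.
Qed.

Theorem mainTheorem4 (C : comNzRingType) (V : lmodType C)
  (br : V -> V -> V) (rho : V -> C -> C)
  (P : (V -> C) -> V) (N : V -> V) (phi : V -> V -> V -> C) :
  PqN br rho P N phi ->
  forall (X : V) (a b : V -> C), linform a -> linform b ->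
    torsion_dualN br rho N P a b X = phi (P a) (P b) X.
Proof.
move=> [_ [HP [_ [HN [HNP [phi3 [_ [Htor _]]]]]]]] X a b la lb.
by rewrite torsion_dualN_pairing // Htor pairing_contraction.
Qed.
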